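(* Let $n\geq 2$ and $m\in\{1,\ldots,n-1\}$. Let $x_1,\ldots,x_n$ be distinct real numbers and $y_1,\ldots,y_n$ be distinct real numbers, and let $S^{\circ m}=[(1+x_iy_j)^m]_{i,j=1}^n$. Let $D_m$ be the $n\times n$ diagonal matrix with diagonal entries $\binom{m}{0},\binom{m}{1},\ldots,\binom{m}{m},0,\ldots,0$ (i.e. $(D_m)_{kk}=\binom{m}{k-1}$ for $1\leq k\leq m+1$ and $(D_m)_{kk}=0$ for $m+2\leq k\leq n$). Then \[ S^{\circ m}=\Big(L^{\mathbf x(1)}\cdots L^{\mathbf x(n-1)}U^{\mathbf x(n-1)}\cdots U^{\mathbf x(1)}\Big)\,D_m\,\Big(L^{\mathbf y(1)}\cdots L^{\mathbf y(n-1)}U^{\mathbf y(n-1)}\cdots U^{\mathbf y(1)}\Big)^T. \]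
   Context: For distinct real numbers $x_1,\ldots,x_n$ and $1\leq k\leq n-1$, the $n\times n$ lower bidiagonal matrix $L^{\mathbf x(k)}$ and upper bidiagonal matrix $U^{\mathbf x(k)}$ are defined by \[ (L^{\mathbf x(k)})_{ij}=\begin{cases} 1 & \text{if } i=j,\\ 1 & \text{if } i=j+1,\ i=n-k+1,\\ \displaystyle\prod_{t=0}^{k-n+i-2}\frac{x_i-x_{i-1-t}}{x_{i-1}-x_{i-2-t}} & \text{if } i=j+1,\ i>n-k+1,\\ 0 & \text{otherwise}, \end{cases} \] \[ (U^{\mathbf x(k)})_{ij}=\begin{cases} 1 & \text{if } i=j,\ i\leq n-k,\\ x_i-x_{n-k} & \text{if } i=j,\ i>n-k,\\ x_1 & \text{if } i=j-1,\ i=n-k,\\ \displaystyle x_{k-n+i+1}\prod_{t=1}^{k-n+i}\frac{x_i-x_{i-t}}{x_{i+1}-x_{i+1-t}} & \text{if } i=j-1,\ i>n-k,\\ 0 & \text{otherwise}. \end{cases} \] $L^{\mathbf y(k)}$ and $U^{\mathbf y(k)}$ are defined in the same way with $y_1,\ldots,y_n$ in place of $x_1,\ldots,x_n$. $A^T$ denotes the transpose. *)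

From mathcomp Require Import all_boot all_order all_algebra.
Set Implicit Arguments. Unset Strict Implicit. Unset Printing Implicit Defensive.
Import Order.TTheory GRing.Theory Num.Theory.
Local Open Scope ring_scope.

(* Conventions: a family x_1,...,x_n of reals is a function x : nat -> R,
   where only the values x 1, ..., x n matter (1-based, as in the paper).
   An n x n matrix 'M[R]_n has 0-based ordinal indices; the paper's entry
   (i,j) (1-based) is the Rocq entry (i-1, j-1). *)

Definition distinct_on {R : realFieldType} (n : nat) (x : nat -> R) : Prop :=
  forall i j : nat, (1 <= i <= n)%N -> (1 <= j <= n)%N -> i <> j -> x i <> x j.

Definition Lmat {R : realFieldType} (n : nat) (x : nat -> R) (k : nat) : 'M[R]_n :=
  \matrix_(i0 < n, j0 < n)
    let i := i0.+1 in let j := j0.+1 in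
    if i == j then 1
    else if i == j.+1 then
      (if i == (n - k).+1 then 1
       else if ((n - k).+1 < i)%N then
         \prod_(0 <= t < (k + i - n - 1)%N)
            ((x i - x (i - 1 - t)%N) / (x (i - 1)%N - x (i - 2 - t)%N))
       else 0)
    else 0.

Definition Umat {R : realFieldType} (n : nat) (x : nat -> R) (k : nat) : 'M[R]_n :=
  \matrix_(i0 < n, j0 < n)
    let i := i0.+1 in let j := j0.+1 in
    if i == j then (if (i <= n - k)%N then 1 else x i - x (n - k)%N)
    else if j == i.+1 then
      (if i == (n - k)%N then x 1%N
       else if ((n - k) < i)%N then
         x (k + i + 1 - n)%N *
         \prod_(1 <= t < (k + i - n).+1)
            ((x i - x (i - t)%N) / (x i.+1 - x (i.+1 - t)%N))
       else 0)
    else 0.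

Definition Lprod {R : realFieldType} (n : nat) (x : nat -> R) : 'M[R]_n :=
  foldr (fun k A => Lmat n x k *m A) 1%:M (iota 1 n.-1).

Definition Uprod {R : realFieldType} (n : nat) (x : nat -> R) : 'M[R]_n :=
  foldr (fun k A => Umat n x k *m A) 1%:M (rev (iota 1 n.-1)).

Definition Spow {R : realFieldType} (n m : nat) (x y : nat -> R) : 'M[R]_n :=
  \matrix_(i < n, j < n) (1 + x i.+1 * y j.+1) ^+ m.

Definition Dmat {R : realFieldType} (n m : nat) : 'M[R]_n :=
  \matrix_(i < n, j < n)
    if i == j then (if (i <= m)%N then ('C(m, i))%:R else 0) else 0.

(* Both brackets are the Vandermonde matrix V_z = [z_i^(j-1)] (z = x, y), factored as
   L U.  The partial products L^(1)...L^(k) and U^(k)...U^(1) have closed forms built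
   from the nodal products prod_(a <= l < j) (z_i - z_l) and the complete homogeneous
   symmetric polynomials h_d(z_1, ..., z_m); each further bidiagonal factor changes
   [a] by one, because the entries of L^(k) and U^(k) are telescoping quotients of
   nodal products.  At k = n - 1 the product LU is the Newton expansion
   z^d = sum_j prod_(l <= j) (z - z_l) * h_(d-j)(z_1, ..., z_(j+1)).  The theorem is
   then the binomial formula (1 + x_i y_j)^m = sum_l C(m, l) x_i^l y_j^l, that is
   S^(o m) = V_x D_m V_y^T. *)

From mathcomp Require Import all_boot all_order all_algebra.
From mathcomp Require Import zify ring.
Set Implicit Arguments.
Unset Strict Implicit.
Unset Printing Implicit Defensive.
Import GRing.Theory Num.Theory.
Local Open Scope ring_scope.

Section NatIndexedMatrices.
Variables (R : comPzRingType) (n : nat).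

Definition mx_nat (f : nat -> nat -> R) : 'M[R]_n := \matrix_(i < n, j < n) f i.+1 j.+1.

Lemma trmx_nat f : (mx_nat f)^T = mx_nat (fun i j => f j i).
Proof. by apply/matrixP => i j; rewrite !mxE. Qed.

Lemma mulmx_nat_lbidiag (f g : nat -> nat -> R) :
    (forall i j, (1 <= i <= n)%N -> (1 <= j <= n)%N -> i != j -> i != j.+1 -> g i j = 0) ->
  forall i j : 'I_n, (mx_nat f *m mx_nat g) i j =
    f i.+1 j.+1 * g j.+1 j.+1 + (if (j.+2 <= n)%N then f i.+1 j.+2 * g j.+2 j.+1 else 0).
Proof.
move=> g_bidiag i j; have jn := ltn_ord j.
rewrite mxE (bigD1 j) //= !mxE; congr (_ + _).
have g0 (k : 'I_n) : (k : nat) != j -> (k : nat) != j.+1 -> g k.+1 j.+1 = 0.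
  by move=> kj kj1; have kn := ltn_ord k; apply: g_bidiag; lia.
case: ifP => j2n.
  rewrite (bigD1 (Ordinal j2n)) /= ?mxE; last by rewrite -val_eqE /=; lia.
  by rewrite big1 ?addr0 // => k /andP[kj kj1]; rewrite !mxE g0 ?mulr0.
by rewrite big1 // => k kj; rewrite !mxE g0 ?mulr0 //; have := ltn_ord k; lia.
Qed.

Lemma mulmx_nat_ubidiag (f g : nat -> nat -> R) :
    (forall i j, (1 <= i <= n)%N -> (1 <= j <= n)%N -> j != i -> j != i.+1 -> f i j = 0) ->
  forall i j : 'I_n, (mx_nat f *m mx_nat g) i j =
    f i.+1 i.+1 * g i.+1 j.+1 + (if (i.+2 <= n)%N then f i.+1 i.+2 * g i.+2 j.+1 else 0).
Proof.
move=> f_bidiag i j; rewrite -[_ *m _]trmxK trmx_mul !trmx_nat mxE.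
rewrite mulmx_nat_lbidiag; last by move=> ? ? ? ? ? ?; apply: f_bidiag.
by rewrite mulrC; congr (_ + _); case: ifP => // _; rewrite mulrC.
Qed.

End NatIndexedMatrices.

Arguments mx_nat {R n}.

Lemma foldr_mulmx_rcons (R : pzRingType) n (F : nat -> 'M[R]_n) s e :
  foldr (fun k A => F k *m A) 1%:M (rcons s e) = foldr (fun k A => F k *m A) 1%:M s *m F e.
Proof. by elim: s => [|a s IH] /=; rewrite ?mulmx1 ?mul1mx // IH mulmxA. Qed.

Lemma prod_nat_rev (R : comPzRingType) (F : nat -> R) z m : (m <= z)%N ->
  \prod_(0 <= t < m) F (z - 1 - t)%N = \prod_(z - m <= l < z) F l.
Proof.
move=> mz; rewrite big_nat_rev -{1}[(z - m)%N]add0n big_addn add0n.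
have -> : (z - (z - m))%N = m by lia.
by apply: eq_big_nat => t tm; congr F; lia.
Qed.

Section VandermondeLU.
Variables (R : realFieldType) (n : nat) (x : nat -> R).
Hypothesis x_distinct : distinct_on n x.

Definition nodal (a j : nat) (z : R) : R := \prod_(a <= l < j) (z - x l).

Lemma nodal_geq a j z : (j <= a)%N -> nodal a j z = 1.
Proof. by move=> ja; rewrite /nodal big_geq. Qed.

Lemma nodal_ltn a j z : (a < j)%N -> nodal a j z = (z - x a) * nodal a.+1 j z.
Proof. by move=> aj; rewrite /nodal big_ltn. Qed.

Lemma nodal_recr a j z : (a <= j)%N -> nodal a j.+1 z = nodal a j z * (z - x j).
Proof. by move=> aj; rewrite /nodal big_nat_recr. Qed.

Lemma nodal_root a i j : (a <= i < j)%N -> nodal a j (x i) = 0.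
Proof.
move=> /andP[ai ij]; rewrite /nodal (big_cat_nat ai (ltnW ij)) /= [X in _ * X]big_ltn //.
by rewrite subrr mul0r mulr0.
Qed.

Lemma sub_distinct_neq0 i j : (1 <= i <= n)%N -> (1 <= j <= n)%N -> i <> j -> x i - x j != 0.
Proof. by move=> i_n j_n ij; rewrite subr_eq0; apply/eqP; apply: x_distinct. Qed.

Lemma nodal_neq0 a i j : (1 <= a)%N -> (i <= n)%N -> (j <= i)%N -> nodal a j (x i) != 0.
Proof.
move=> a1 i_n ji; rewrite /nodal prodf_seq_neq0; apply/allP => l.
by rewrite mem_index_iota => l_ij; apply/implyP => _; apply: sub_distinct_neq0; lia.
Qed.

Definition Lentry k (i j : nat) : R :=
  if i == j then 1
  else if i == j.+1 then
    (if i == (n - k).+1 then 1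
     else if ((n - k).+1 < i)%N then
       \prod_(0 <= t < (k + i - n - 1)%N)
          ((x i - x (i - 1 - t)%N) / (x (i - 1)%N - x (i - 2 - t)%N))
     else 0)
  else 0.

Lemma Lmat_nat k : Lmat n x k = mx_nat (Lentry k).
Proof. by apply/matrixP => i j; rewrite !mxE. Qed.

Lemma Lentry_diag k i : Lentry k i i = 1.
Proof. by rewrite /Lentry eqxx. Qed.

Lemma Lentry_subdiag b j : (b <= n)%N -> (j < n)%N ->
  Lentry (n - b) j.+1 j = if (j < b)%N then 0 else nodal b.+1 j.+1 (x j.+1) / nodal b j (x j).
Proof.
move=> bn jn; rewrite /Lentry (gtn_eqF (ltnSn j)) eqxx.
have -> : (n - (n - b))%N = b by lia.
rewrite eqSS; case: (ltngtP j b) => jb.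
- by have -> : (b.+1 < j.+1)%N = false by lia.
- have -> : (n - b + j.+1 - n - 1)%N = (j - b)%N by lia.
  rewrite ltnS jb prodf_div (prod_nat_rev (fun l => x j.+1 - x l)); last by lia.
  rewrite [X in _ / X](eq_bigr (fun t => x j - x (j - 1 - t)%N)); last first.
    by move=> t _; congr (x _ - x _); lia.
  rewrite (prod_nat_rev (fun l => x j - x l)); last by lia.
  by rewrite /nodal; congr (\prod_(_ <= _ < _) _ / \prod_(_ <= _ < _) _); lia.
- by rewrite jb !nodal_geq // divr1.
Qed.

Definition Lpart (a i j : nat) : R :=
  if (j < a)%N then (i == j)%:R
  else if (i < a)%N then 0 else nodal a j (x i) / nodal a j (x j).

Lemma Lpart_step_entry b p q :
    (1 <= b < n)%N -> (1 <= p <= n)%N -> (1 <= q < n)%N ->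
  Lpart b.+1 p q + Lpart b.+1 p q.+1 * Lentry (n - b) q.+1 q = Lpart b p q.
Proof.
move=> bn pn qn; rewrite Lentry_subdiag; [|lia|lia].
rewrite /Lpart; case: (ltngtP q b) => qb.
- by rewrite ltnW // ltnS qb mulr0 addr0.
- have [-> ->] : (q < b.+1)%N = false /\ (q.+1 < b.+1)%N = false by lia.
  case: (ltngtP p b) => pb.
  + by rewrite ltnW // mul0r addr0.
  + have -> : (p < b.+1)%N = false by lia.
    rewrite (nodal_recr (x p) qb) (nodal_ltn (x p) qb) (nodal_ltn (x q) qb).
    have q0 : nodal b.+1 q (x q) != 0 by apply: nodal_neq0; lia.
    have q1 : nodal b.+1 q.+1 (x q.+1) != 0 by apply: nodal_neq0; lia.
    have qb0 : x q - x b != 0 by apply: sub_distinct_neq0; lia.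
    by field; rewrite q0 q1 qb0.
  + by rewrite pb ltnSn (@nodal_root b b q) ?mul0r ?addr0 //; lia.
- rewrite qb ltnSn ltnn !(nodal_geq _ (leqnn _)) divr1.
  case: (ltngtP p b) => pb.
  + by rewrite ltnW // mul0r addr0.
  + have -> : (p < b.+1)%N = false by lia.
    by rewrite add0r mulr1.
  + by rewrite pb ltnSn mul0r addr0.
Qed.

Lemma Lpart_step_last b p : (1 <= b < n)%N -> (1 <= p <= n)%N -> Lpart b.+1 p n = Lpart b p n.
Proof.
move=> bn pn; rewrite /Lpart.
have [-> ->] : (n < b.+1)%N = false /\ (n < b)%N = false by lia.
case: (ltngtP p b) => pb.
- by have -> : (p < b.+1)%N by lia.
- have -> : (p < b.+1)%N = false by lia.
  have [p_n | ->] : (p < n)%N \/ p = n by lia.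
    by rewrite (@nodal_root b.+1 p n) ?(@nodal_root b p n) ?mul0r //; lia.
  by rewrite !divff //; apply: nodal_neq0; lia.
- by rewrite pb ltnSn (@nodal_root b b n) ?mul0r //; lia.
Qed.

Lemma Lpart_step b : (1 <= b < n)%N ->
  mx_nat (Lpart b.+1) *m Lmat n x (n - b) = mx_nat (Lpart b).
Proof.
move=> bn; rewrite Lmat_nat; apply/matrixP => i j.
rewrite mulmx_nat_lbidiag; last by move=> ? ? _ _ /negbTE ij /negbTE ij1; rewrite /Lentry ij ij1.
rewrite mxE Lentry_diag mulr1.
have := ltn_ord i; have := ltn_ord j; case: ifP => j2n jn i_n.
  by apply: Lpart_step_entry; lia.
have -> : j.+1 = n by lia.
by rewrite addr0 Lpart_step_last //; lia.
Qed.

Lemma foldr_Lmat_iota k : (k <= n.-1)%N ->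
  foldr (fun k A => Lmat n x k *m A) 1%:M (iota 1 k) = mx_nat (Lpart (n - k)).
Proof.
elim: k => [_ | k IH kn].
  apply/matrixP => i j; have := ltn_ord i; have := ltn_ord j.
  rewrite !mxE /Lpart subn0 -val_eqE /= eqSS => jn i_n.
  case: ltnP => // jn'; rewrite !nodal_geq ?divr1 //.
  by case: ltnP => in'; case: eqVneq => //; lia.
rewrite -(addn1 k) iotaD cats1 foldr_mulmx_rcons IH; last by lia.
have -> : (n - k = (n - (k + 1)).+1)%N by lia.
have -> : (1 + k = n - (n - (k + 1)))%N by lia.
by apply: Lpart_step; lia.
Qed.

(* [hsym m d] is the complete homogeneous symmetric polynomial h_d(x_1, ..., x_m). *)
Fixpoint hsym (m d : nat) : R :=
  if m is m'.+1 then \sum_(k < d.+1) x m ^+ k * hsym m' (d - k)%N else (d == 0%N)%:R.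
Arguments hsym : simpl never.

Lemma hsym0S d : hsym 0 d.+1 = 0.
Proof. by []. Qed.

Lemma hsymS m d : hsym m.+1 d = \sum_(k < d.+1) x m.+1 ^+ k * hsym m (d - k)%N.
Proof. by []. Qed.

Lemma hsym_0 m : hsym m 0 = 1.
Proof. by elim: m => // m IH; rewrite hsymS big_ord1 IH mulr1. Qed.

Lemma hsymSS m d : hsym m.+1 d.+1 = hsym m d.+1 + x m.+1 * hsym m.+1 d.
Proof.
rewrite !hsymS big_ord_recl expr0 mul1r mulr_sumr; congr (_ + _).
by apply: eq_bigr => k _; rewrite exprS mulrA.
Qed.

Definition Upart (a i j : nat) : R :=
  if (i < a)%N then (i == j)%:R
  else if (j < i)%N then 0 else nodal a i (x i) * hsym (i - a).+1 (j - i)%N.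

Definition Uentry k (i j : nat) : R :=
  if i == j then (if (i <= n - k)%N then 1 else x i - x (n - k)%N)
  else if j == i.+1 then
    (if i == (n - k)%N then x 1%N
     else if ((n - k) < i)%N then
       x (k + i + 1 - n)%N *
       \prod_(1 <= t < (k + i - n).+1)
          ((x i - x (i - t)%N) / (x i.+1 - x (i.+1 - t)%N))
     else 0)
  else 0.

Lemma Umat_nat k : Umat n x k = mx_nat (Uentry k).
Proof. by apply/matrixP => i j; rewrite !mxE. Qed.

Lemma Uentry_diag b i : (b <= n)%N -> Uentry (n - b) i i = if (i <= b)%N then 1 else x i - x b.
Proof. by move=> bn; rewrite /Uentry eqxx; have -> : (n - (n - b))%N = b by lia. Qed.

Lemma Uentry_superdiag b i : (b <= n)%N -> (i < n)%N ->
  Uentry (n - b) i i.+1 =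
    if (i < b)%N then 0 else x (i - b).+1 * (nodal b i (x i) / nodal b.+1 i.+1 (x i.+1)).
Proof.
move=> bn i_n; rewrite /Uentry (ltn_eqF (ltnSn i)) eqxx.
have -> : (n - (n - b))%N = b by lia.
case: (ltngtP i b) => ib //.
- have -> : (n - b + i + 1 - n)%N = (i - b).+1 by lia.
  have -> : (n - b + i - n)%N = (i - b)%N by lia.
  congr (_ * _); rewrite big_add1 /= prodf_div.
  rewrite [X in X / _](eq_bigr (fun t => x i - x (i - 1 - t)%N)); last first.
    by move=> t _; congr (x _ - x _); lia.
  rewrite [X in _ / X](eq_bigr (fun t => x i.+1 - x (i.+1 - 1 - t)%N)); last first.
    by move=> t _; congr (x _ - x _); lia.
  rewrite (prod_nat_rev (fun l => x i - x l)); last by lia.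
  rewrite (prod_nat_rev (fun l => x i.+1 - x l)); last by lia.
  by rewrite /nodal; congr (\prod_(_ <= _ < _) _ / \prod_(_ <= _ < _) _); lia.
- by rewrite ib !nodal_geq // divr1 subnn mulr1.
Qed.

Lemma Upart_step_entry b p q :
    (1 <= b < n)%N -> (1 <= p <= n)%N -> (1 <= q <= n)%N ->
  Uentry (n - b) p p * Upart b.+1 p q +
  (if (p < n)%N then Uentry (n - b) p p.+1 * Upart b.+1 p.+1 q else 0) = Upart b p q.
Proof.
move=> bn pn qn; rewrite Uentry_diag; last by lia.
have -> : (if (p < n)%N then Uentry (n - b) p p.+1 * Upart b.+1 p.+1 q else 0) =
    if (p < n)%N then
      (if (p < b)%N then 0 else x (p - b).+1 * (nodal b p (x p) / nodal b.+1 p.+1 (x p.+1)))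
      * Upart b.+1 p.+1 q
    else 0 by case: ifP => // p_n; rewrite Uentry_superdiag //; lia.
rewrite /Upart; case: (ltngtP p b) => pb.
- have -> : (p < b.+1)%N by lia.
  by rewrite mul1r; case: ifP => _; rewrite ?mul0r addr0.
- have [-> ->] : (p < b.+1)%N = false /\ (p.+1 < b.+1)%N = false by lia.
  case: (ltngtP q p) => qp.
  + have -> : (q < p.+1)%N by lia.
    by rewrite !mulr0 add0r; case: ifP.
  + have [-> ->] : (p < n)%N /\ (q < p.+1)%N = false by lia.
    have -> : (p - b.+1).+1 = (p - b)%N by lia.
    have -> : (p.+1 - b.+1).+1 = (p - b).+1 by lia.
    have -> : (q - p)%N = (q - p.+1).+1 by lia.
    rewrite hsymSS (nodal_ltn (x p) pb).
    have p1 : nodal b.+1 p.+1 (x p.+1) != 0 by apply: nodal_neq0; lia.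
    by field; rewrite p1.
  + rewrite qp subnn !hsym_0 (nodal_ltn (x p) pb) (ltnSn p) !mulr0.
    by case: ifP => _; rewrite addr0 !mulr1.
- rewrite pb (ltnSn b) ltnn mul1r subnn !nodal_geq // divr1 mulr1 mul1r.
  have -> : (b < n)%N by lia.
  case: (ltngtP q b) => qb.
  + have -> : (q < b.+1)%N by lia.
    by rewrite mulr0 addr0.
  + have -> : (q < b.+1)%N = false by lia.
    have -> : (q - b)%N = (q - b.+1).+1 by lia.
    by rewrite subnn add0r mul1r hsymSS hsym0S add0r.
  + by rewrite qb (ltnSn b) mulr0 addr0 subnn hsym_0 mul1r.
Qed.

Lemma Upart_step b : (1 <= b < n)%N ->
  Umat n x (n - b) *m mx_nat (Upart b.+1) = mx_nat (Upart b).
Proof.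
move=> bn; rewrite Umat_nat; apply/matrixP => i j.
rewrite mulmx_nat_ubidiag; last first.
  by move=> ? ? _ _ ji ji1; rewrite /Uentry eq_sym (negbTE ji) (negbTE ji1).
have := ltn_ord i; have := ltn_ord j.
by rewrite mxE => jn i_n; apply: Upart_step_entry; lia.
Qed.

Lemma foldr_Umat_rev_iota k : (k <= n.-1)%N ->
  foldr (fun k A => Umat n x k *m A) 1%:M (rev (iota 1 k)) = mx_nat (Upart (n - k)).
Proof.
elim: k => [_ | k IH kn].
  apply/matrixP => i j; have := ltn_ord i; have := ltn_ord j.
  rewrite !mxE /Upart subn0 eqSS => jn i_n.
  case: ltnP => // in'; have -> : (i.+1 - n)%N = 0%N by lia.
  rewrite nodal_geq // mul1r.
  have [->|ij] := eqVneq i j; first by rewrite ltnn subnn hsym_0.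
  suff -> : (j.+1 < i.+1)%N by [].
  by move: ij; rewrite -val_eqE /=; lia.
rewrite -(addn1 k) iotaD cats1 rev_rcons /= IH; last by lia.
have -> : (n - k = (n - (k + 1)).+1)%N by lia.
have -> : (1 + k = n - (n - (k + 1)))%N by lia.
by apply: Upart_step; lia.
Qed.

Lemma nodal_hsym_expansion z d :
  \sum_(j < d.+1) nodal 1 j.+1 z * hsym j.+1 (d - j)%N = z ^+ d.
Proof.
elim: d => [|d IH]; first by rewrite big_ord1 nodal_geq // hsym_0 mulr1.
rewrite exprS -IH mulr_sumr.
have split_hsym : \sum_(j < d.+2) nodal 1 j.+1 z * hsym j.+1 (d.+1 - j)%N =
   \sum_(j < d.+1) nodal 1 j.+1 z * hsym j (d.+1 - j)%N
   + \sum_(j < d.+1) x j.+1 * (nodal 1 j.+1 z * hsym j.+1 (d - j)%N) + nodal 1 d.+2 z.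
  rewrite big_ord_recr /= subnn hsym_0 mulr1 -big_split /=; congr (_ + _).
  apply: eq_bigr => j _; have := ltn_ord j => jd.
  have -> : (d.+1 - j)%N = (d - j)%N.+1 by lia.
  by rewrite hsymSS; ring.
have split_z : \sum_(j < d.+1) z * (nodal 1 j.+1 z * hsym j.+1 (d - j)%N) =
   \sum_(j < d.+1) nodal 1 j.+2 z * hsym j.+1 (d - j)%N
   + \sum_(j < d.+1) x j.+1 * (nodal 1 j.+1 z * hsym j.+1 (d - j)%N).
  by rewrite -big_split; apply: eq_bigr => j _ /=; rewrite (@nodal_recr 1 j.+1) //; ring.
have shift : \sum_(j < d.+1) nodal 1 j.+1 z * hsym j (d.+1 - j)%N + nodal 1 d.+2 z =
   \sum_(j < d.+1) nodal 1 j.+2 z * hsym j.+1 (d - j)%N.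
  rewrite big_ord_recl /= hsym0S mulr0 add0r [RHS]big_ord_recr /= subnn hsym_0 mulr1.
  by congr (_ + _); apply: eq_bigr => j _.
by rewrite split_hsym split_z -shift; ring.
Qed.

Definition vander_nat : 'M[R]_n := \matrix_(i < n, j < n) x i.+1 ^+ j.

Lemma Lpart1_mul_Upart1 : mx_nat (Lpart 1) *m mx_nat (Upart 1) = vander_nat.
Proof.
apply/matrixP => i k; have := ltn_ord i; have := ltn_ord k => kn i_n.
rewrite !mxE -(nodal_hsym_expansion (x i.+1) k).
rewrite (big_ord_widen n (fun j => nodal 1 j.+1 (x i.+1) * hsym j.+1 (k - j)%N) kn).
rewrite [RHS]big_mkcond; apply: eq_bigr => j _; have := ltn_ord j => jn.
rewrite !mxE /Lpart /Upart !subSS subn0 ltnS /=.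
case: leqP => jk; last by rewrite mulr0.
by rewrite mulrA divfK //; apply: nodal_neq0.
Qed.

Lemma Lprod_mul_Uprod : Lprod n x *m Uprod n x = vander_nat.
Proof.
have [n0 | n_pos] := posnP n.
  by apply/matrixP => i; have := ltn_ord i; rewrite {2}n0.
rewrite /Lprod /Uprod foldr_Lmat_iota // foldr_Umat_rev_iota //.
have -> : (n - n.-1)%N = 1%N by lia.
exact: Lpart1_mul_Upart1.
Qed.

End VandermondeLU.

Lemma mulmx_Dmat (R : realFieldType) n m (A : 'M[R]_n) :
  A *m Dmat n m = \matrix_(i, l) (A i l * (if (l <= m)%N then ('C(m, l))%:R else 0)).
Proof.
apply/matrixP => i l; rewrite !mxE (bigD1 l) //= big1 ?addr0; first by rewrite mxE eqxx.
by move=> k kl; rewrite mxE (negbTE kl) mulr0.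
Qed.

Lemma Spow_vander (R : realFieldType) n m (x y : nat -> R) : (m < n)%N ->
  Spow n m x y = (vander_nat n x *m Dmat n m) *m (vander_nat n y)^T.
Proof.
move=> mn; rewrite mulmx_Dmat; apply/matrixP => i j; rewrite !mxE addrC exprD1n.
rewrite (big_ord_widen n (fun l => (x i.+1 * y j.+1) ^+ l *+ 'C(m, l)) mn) big_mkcond.
apply: eq_bigr => l _; rewrite !mxE ltnS.
by case: ifP => _; rewrite ?mulr0 ?mul0r // -mulr_natr exprMn; ring.
Qed.

Theorem theorem2p4 (R : realFieldType) (n m : nat) (x y : nat -> R) :
  (2 <= n)%N -> (1 <= m <= n - 1)%N ->
  distinct_on n x -> distinct_on n y ->
  Spow n m x y =
  ((Lprod n x *m Uprod n x) *m Dmat n m) *m (Lprod n y *m Uprod n y)^T.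
Proof.
move=> n2 /andP[_ m_lt] x_distinct y_distinct.
rewrite !Lprod_mul_Uprod //; apply: Spow_vander; lia.
Qed.
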